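(* The homogeneous $(-1)$-configurations are exactly: $\mathcal{L}(1,0,2,1)$ and $\mathcal{L}(2,0,5,1)$ (non-compound), and the compound ones $\mathcal{L}(3,0,3,2)$ (with $\delta=1,n=3,\mu_1=0,\mu_2=1$), $\mathcal{L}(12,0,6,5)$ (with $\delta=2,n=6,\mu_1=0,\mu_2=1$), $\mathcal{L}(21,0,7,8)$ (with $\delta=3,n=7,\mu_1=2,\mu_2=1$), and $\mathcal{L}(48,0,8,17)$ (with $\delta=6,n=8,\mu_1=3,\mu_2=2$).
   Context: Let $p_1,\dots,p_n$ be general points of $\mathbb{P}^2$, $\mathbb{P}'$ the blow-up with pulled-back line class $H$, exceptional curves $E_i$, canonical class $K=-3H+\sum E_i$. $\mathcal{L}(d,0,n,m)$ denotes the class $dH-m\sum_{i=1}^nE_i$ (plane curves of degree $d$ with multiplicity $m$ at $p_1,\dots,p_n$). A numerical $(-1)$-class is a class $A$ with $A^2=-1$ and $A\cdot K=-1$. A homogeneous $(-1)$-configuration is either (non-compound) a class $\mathcal{L}(d,0,n,m)$ which is itself a numerical $(-1)$-class, or (compound) a class of the form $\sum_{\sigma}A_\sigma$ where $n\ge2$, $A=\delta H-\mu_1E_1-\mu_2\sum_{i=2}^nE_i$ is a numerical $(-1)$-class with $\delta\ge1$, $\mu_1,\mu_2\ge0$, $\mu_1\ne\mu_2$, the $A_\sigma$ are the $n$ distinct classes obtained from $A$ by permuting $E_1,\dots,E_n$, and $A_\sigma\cdot A_\tau=0$ for $A_\sigma\neq A_\tau$; this sum is $\mathcal{L}(n\delta,0,n,\mu_1+(n-1)\mu_2)$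 (and necessarily $\mu_1=\mu_2\pm1$). *)

From mathcomp Require Import all_boot all_order all_algebra all_fingroup.
Set Implicit Arguments. Unset Strict Implicit. Unset Printing Implicit Defensive.
Import GRing.Theory Num.Theory.
Local Open Scope ring_scope.

(* Divisor classes on the blow-up P' of P^2 at n general points:
   the pair (a, b) stands for  a*H + \sum_i b_i * E_i  (Pic P' = Z^{1+n}). *)
Definition cls (n : nat) := (int * {ffun 'I_n -> int})%type.

(* intersection form: H^2 = 1, E_i^2 = -1, H.E_i = 0, E_i.E_j = 0 (i<>j) *)
Definition dotc n (A B : cls n) : int :=
  A.1 * B.1 - \sum_(i < n) A.2 i * B.2 i.

Definition Kc n : cls n := (-3, [ffun=> 1]).

Definition addc n (A B : cls n) : cls n :=
  (A.1 + B.1, [ffun i => A.2 i + B.2 i]).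
Definition zeroc n : cls n := (0, [ffun=> 0]).
Definition sumc n (s : seq (cls n)) : cls n := foldr (@addc n) (zeroc n) s.

Definition minus1_class n (A : cls n) : Prop :=
  dotc A A = -1 /\ dotc A (Kc n) = -1.

(* L(d,0,n,m) = d H - m \sum_{i=1}^n E_i *)
Definition Lcls (n d m : nat) : cls n := (d%:Z, [ffun=> - (m%:Z)]).

Definition permc n (s : {perm 'I_n}) (A : cls n) : cls n :=
  (A.1, [ffun i => A.2 (s i)]).

Definition orbitc n (A : cls n) : seq (cls n) :=
  undup [seq permc s A | s : {perm 'I_n}].

(* A = delta H - mu1 E_1 - mu2 \sum_{i>=2} E_i  (E_1 has index 0) *)
Definition Acls (n delta mu1 mu2 : nat) : cls n :=
  (delta%:Z, [ffun i : 'I_n => if val i == 0%N then - (mu1%:Z) else - (mu2%:Z)]).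

Definition compound_data (n delta mu1 mu2 : nat) : Prop :=
  [/\ (2 <= n)%N, (1 <= delta)%N, mu1 != mu2,
      minus1_class (Acls n delta mu1 mu2) &
      forall B C, B \in orbitc (Acls n delta mu1 mu2) ->
                  C \in orbitc (Acls n delta mu1 mu2) -> B != C -> dotc B C = 0].

Definition noncompound_conf (n d m : nat) : Prop := minus1_class (Lcls n d m).

Definition compound_conf (n d m : nat) : Prop :=
  exists delta mu1 mu2, compound_data n delta mu1 mu2 /\
    sumc (orbitc (Acls n delta mu1 mu2)) = Lcls n d m.

Definition homog_conf (n d m : nat) : Prop :=
  noncompound_conf n d m \/ compound_conf n d m.

From mathcomp Require Import all_boot all_order all_algebra all_fingroup zify ring.
Set Implicit Arguments. Unset Strict Implicit. Unset Printing Implicit Defensive.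
Import GRing.Theory Num.Theory.
Local Open Scope ring_scope.

(* Let A_j be the class with multiplicity mu1 at E_j and mu2 at the other
   points; the permutation orbit of A = A_0 is {A_j | j}, and it sums to
   L(n delta, 0, n, mu1 + (n-1) mu2).  So everything becomes diophantine:
   A^2 = -1, A.K = -1 and A_j.A_k = 0.  Subtracting the last from the first
   gives (mu1 - mu2)^2 = 1.  If mu1 = mu2 + 1, the two remaining equations
   force delta = 3 mu2 and mu2 (9 - n) = 2; if mu2 = mu1 + 1 they force
   (mu1 + 1) n (9 - n) = 18.  For a non-compound L(d,0,n,m), eliminating n
   gives (3d - 1)(9m - 3d - 1) = 10. *)

Lemma card_predD2 n (j k : 'I_n) : j != k ->
  #|[pred i : 'I_n | (i != j) && (i != k)]| = n.-2.
Proof.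
move=> jk; have := cardD1 j 'I_n; rewrite card_ord (cardD1 k) !inE eq_sym jk.
move=> Hn; rewrite [in RHS]Hn /= add0n.
by apply: eq_card => i; rewrite !inE andbT andbC.
Qed.

Lemma sum_if_eq (R : nmodType) n (j : 'I_n) (a b : R) :
  \sum_(i < n) (if i == j then a else b) = a + b *+ n.-1.
Proof.
rewrite (bigD1 j) //= eqxx (eq_bigr (fun _ => b)) => [|i /negbTE -> //].
by rewrite sumr_const cardC1 card_ord.
Qed.

Lemma sum_if_eq2 (R : pzSemiRingType) n (j k : 'I_n) (a b c d : R) :
  j != k ->
  \sum_(i < n) ((if i == j then a else b) * (if i == k then c else d)) =
   a * d + b * c + (b * d) *+ n.-2.
Proof.
move=> jk; rewrite (bigD1 j) //= eqxx (negbTE jk) -addrA; congr (_ + _).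
rewrite (bigD1 k) /=; last by rewrite eq_sym.
rewrite eqxx eq_sym (negbTE jk); congr (_ + _).
rewrite (eq_bigr (fun _ => b * d)) => [|i /andP[/negbTE -> /negbTE ->] //].
by rewrite sumr_const card_predD2.
Qed.

Definition Acls_at n (delta mu1 mu2 : nat) (j : 'I_n) : cls n :=
  (delta%:Z, [ffun i => if i == j then - (mu1%:Z) else - (mu2%:Z)]).

Lemma Acls_at0 n d a b : Acls n.+1 d a b = Acls_at d a b ord0.
Proof. by congr pair; apply/ffunP => i; rewrite !ffunE. Qed.

Lemma dotc_Acls_at n d a b (j : 'I_n) :
  dotc (Acls_at d a b j) (Acls_at d a b j) =
  d%:Z ^+ 2 - (a%:Z ^+ 2 + b%:Z ^+ 2 *+ n.-1).
Proof.
rewrite /dotc (eq_bigr (fun i => if i == j then a%:Z ^+ 2 else b%:Z ^+ 2)).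
  by rewrite sum_if_eq expr2.
by move=> i _; rewrite !ffunE; case: (i == j); rewrite mulrNN expr2.
Qed.

Lemma dotc_Acls_at_Kc n d a b (j : 'I_n) :
  dotc (Acls_at d a b j) (Kc n) = - 3 * d%:Z + (a%:Z + b%:Z *+ n.-1).
Proof.
rewrite /dotc (eq_bigr (fun i => if i == j then - a%:Z else - b%:Z)).
  by rewrite sum_if_eq mulNrn -(opprD (Posz a)) opprK.
by move=> i _; rewrite !ffunE mulr1.
Qed.

Lemma dotc_Acls_at_neq n d a b (j k : 'I_n) : j != k ->
  dotc (Acls_at d a b j) (Acls_at d a b k) =
  d%:Z ^+ 2 - (2 * a%:Z * b%:Z + b%:Z ^+ 2 *+ n.-2).
Proof.
move=> jk; rewrite /dotc (eq_bigr (fun i =>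
  (if i == j then - a%:Z else - b%:Z) * (if i == k then - a%:Z else - b%:Z))).
  by rewrite sum_if_eq2 // !mulrNN; congr (_ - (_ + _)); ring.
by move=> i _; rewrite !ffunE.
Qed.

Lemma permc_Acls_at n (s : {perm 'I_n}) d a b j :
  permc s (Acls_at d a b j) = Acls_at d a b ((s^-1)%g j).
Proof.
by congr pair; apply/ffunP => i; rewrite !ffunE (canF_eq (permK s)).
Qed.

Lemma Acls_at_inj n d a b : a != b -> injective (@Acls_at n d a b).
Proof.
move=> ab j k /(congr1 (fun A : cls n => A.2 j)); rewrite /= !ffunE eqxx.
by case: eqP => // _ /oppr_inj /eqP; rewrite eqz_nat (negbTE ab).
Qed.

Lemma orbitc_Acls_atP n d a b (j : 'I_n) B :
  reflect (exists k, B = Acls_at d a b k) (B \in orbitc (Acls_at d a b j)).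
Proof.
rewrite mem_undup; apply: (iffP mapP) => [[s _ ->] | [k ->]].
  by exists ((s^-1)%g j); rewrite permc_Acls_at.
by exists (tperm j k); rewrite ?mem_enum // permc_Acls_at tpermV tpermL.
Qed.

Lemma perm_eq_orbitc_Acls_at n d a b (j : 'I_n) : a != b ->
  perm_eq (orbitc (Acls_at d a b j)) [seq Acls_at d a b k | k <- enum 'I_n].
Proof.
move=> ab; apply: uniq_perm; first exact: undup_uniq.
  by rewrite map_inj_uniq ?enum_uniq //; exact: Acls_at_inj.
move=> B; apply/orbitc_Acls_atP/mapP => [[k ->] | [k _ ->]]; exists k => //.
by rewrite mem_enum.
Qed.

Lemma sumcE n (s : seq (cls n)) :
  sumc s = (\sum_(A <- s) A.1, [ffun i => \sum_(A <- s) A.2 i]).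
Proof.
elim: s => [|A s IHs] /=.
  by rewrite /zeroc big_nil; congr pair; apply/ffunP => i; rewrite !ffunE big_nil.
by rewrite IHs big_cons; congr pair; apply/ffunP => i; rewrite !ffunE big_cons.
Qed.

Lemma sumc_orbitc_Acls_at n d a b (j : 'I_n) : a != b ->
  sumc (orbitc (Acls_at d a b j)) = (d%:Z *+ n, [ffun=> - (a%:Z + b%:Z *+ n.-1)]).
Proof.
move=> ab; rewrite sumcE; congr pair.
  by rewrite (perm_big _ (perm_eq_orbitc_Acls_at d j ab)) big_map big_enum
     sumr_const card_ord.
apply/ffunP => i; rewrite !ffunE (perm_big _ (perm_eq_orbitc_Acls_at d j ab)).
rewrite big_map big_enum (eq_bigr (fun k => if k == i then - a%:Z else - b%:Z)).
  by rewrite sum_if_eq mulNrn opprD.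
by move=> k _; rewrite ffunE eq_sym.
Qed.

Lemma dotc_Lcls n d m : dotc (Lcls n d m) (Lcls n d m) = d%:Z ^+ 2 - m%:Z ^+ 2 *+ n.
Proof.
rewrite /dotc (eq_bigr (fun _ => m%:Z ^+ 2)) => [|i _]; last first.
  by rewrite !ffunE mulrNN expr2.
by rewrite sumr_const card_ord expr2.
Qed.

Lemma dotc_Lcls_Kc n d m : dotc (Lcls n d m) (Kc n) = - 3 * d%:Z + m%:Z *+ n.
Proof.
rewrite /dotc (eq_bigr (fun _ => - m%:Z)) => [|i _]; last by rewrite !ffunE mulr1.
by rewrite sumr_const card_ord mulNrn opprK.
Qed.

Lemma Lcls_inj n d m d' m' : (0 < n)%N ->
  Lcls n d m = Lcls n d' m' -> d = d' /\ m = m'.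
Proof.
case: n => // n _ [-> /(congr1 (fun f : {ffun 'I_n.+1 -> int} => f ord0))].
by rewrite !ffunE => /oppr_inj [].
Qed.

Lemma noncompound_solutions (n d m : nat) :
  (d ^ 2 + 1 = n * m ^ 2)%N -> (3 * d = n * m + 1)%N ->
  ((d, n, m) = (1, 2, 1) \/ (d, n, m) = (2, 5, 1))%N.
Proof.
move=> Esq Elin.
have Efac : (3 * d%:Z - 1) * (9 * m%:Z - 3 * d%:Z - 1) = 10.
  have Em : m%:Z * (3 * d%:Z - 1) = d%:Z ^+ 2 + 1 by nia.
  nia.
have d_pos : (0 < d)%N by lia.
have d_le3 : (d <= 3)%N.
  have factor_pos : 0 < 3 * d%:Z - 1 by lia.
  have cofactor_pos : 0 < 9 * m%:Z - 3 * d%:Z - 1.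
    by rewrite -(pmulr_rgt0 _ factor_pos) Efac.
  nia.
have [d_eq | d_eq] : d = 1%N \/ d = 2%N.
  by case: d d_le3 d_pos Efac {Esq Elin} => [|[|[|[|]]]] //= _ _ Efac; lia.
- by left; subst d; congr (_, _, _); lia.
- by right; subst d; congr (_, _, _); lia.
Qed.

Lemma compound_gap (n d a b : nat) : (2 <= n)%N ->
  (d ^ 2 + 1 = a ^ 2 + n.-1 * b ^ 2)%N -> (d ^ 2 = 2 * a * b + n.-2 * b ^ 2)%N ->
  (a = b.+1 \/ b = a.+1)%N.
Proof.
move=> n_ge2 Eself Eorth.
have : (a%:Z - b%:Z) ^+ 2 = 1 by nia.
rewrite -[1](expr1n _ 2) => /eqP; rewrite eqf_sqr => /orP[] /eqP; lia.
Qed.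

Lemma compound_solutions_succ (n d b : nat) : (2 <= n)%N -> (1 <= d)%N ->
  (3 * d = b.+1 + n.-1 * b + 1)%N -> (d ^ 2 = 2 * b.+1 * b + n.-2 * b ^ 2)%N ->
  ((d, n, b) = (3, 7, 1) \/ (d, n, b) = (6, 8, 2))%N.
Proof.
move=> n_ge2 d_pos Elin Eorth.
have d_eq : d = (3 * b)%N.
  by apply/eqP; rewrite -(eqn_pmul2r d_pos); apply/eqP; nia.
have Eb : (b * (9 - n) = 2)%N by nia.
have b_le2 : (b <= 2)%N by nia.
subst d; case: b b_le2 Eb {Elin Eorth d_pos} => [|[|[|]]] //= _ Eb;
  [left | right]; congr (_, _, _); lia.
Qed.

Lemma compound_solutions_pred (n d a : nat) : (2 <= n)%N ->
  (3 * d = a + n.-1 * a.+1 + 1)%N -> (d ^ 2 = 2 * a * a.+1 + n.-2 * a.+1 ^ 2)%N ->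
  ((d, n, a) = (1, 3, 0) \/ (d, n, a) = (2, 6, 0))%N.
Proof.
case: n => [|[|k]] // _; rewrite !succnK => Elin Eorth.
have {}Elin : (3 * d = k.+2 * a.+1)%N by lia.
have {}Eorth : (d ^ 2 + 2 * a.+1 = k.+2 * a.+1 ^ 2)%N by rewrite Eorth; ring.
have Efac : a.+1%:Z * (a.+1%:Z * k.+2%:Z * (7 - k%:Z) - 18) = 0.
  have Esq : ((k.+2 * a.+1) ^ 2 = 9 * d ^ 2)%N by rewrite -Elin expnMn.
  nia.
have {}Efac : a.+1%:Z * k.+2%:Z * (7 - k%:Z) = 18.
  by move/eqP: Efac; rewrite mulf_eq0 => /orP[] /eqP; lia.
have k_le6 : (k <= 6)%N by nia.
case: k k_le6 Efac Elin {Eorth} => [|[|[|[|[|[|[|]]]]]]] //= _ Efac Elin; try lia.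
- by left; congr (_, _, _); lia.
- by right; congr (_, _, _); lia.
Qed.

Lemma noncompound_confE n d m :
  noncompound_conf n d m <-> (d ^ 2 + 1 = n * m ^ 2 /\ 3 * d = n * m + 1)%N.
Proof.
rewrite /noncompound_conf /minus1_class dotc_Lcls dotc_Lcls_Kc.
by split=> -[E1 E2]; split; lia.
Qed.

Lemma noncompound_conf_classification n d m : noncompound_conf n d m <->
  ((d, n, m) = (1, 2, 1) \/ (d, n, m) = (2, 5, 1))%N.
Proof.
rewrite noncompound_confE; split=> [[] | ]; first exact: noncompound_solutions.
by case=> -[-> -> ->].
Qed.

Lemma orthogonal_orbitc_Acls_at n d a b (j : 'I_n) : a != b ->
  (forall B C, B \in orbitc (Acls_at d a b j) -> C \in orbitc (Acls_at d a b j) ->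
     B != C -> dotc B C = 0) <->
  (forall k l : 'I_n, k != l -> dotc (Acls_at d a b k) (Acls_at d a b l) = 0).
Proof.
move=> ab; split=> orth; last first.
  move=> _ _ /orbitc_Acls_atP[k ->] /orbitc_Acls_atP[l ->] kl.
  by apply: orth; apply: contraNneq kl => ->.
move=> k l kl; apply: orth; last by rewrite (inj_eq (@Acls_at_inj n d a b ab)).
  by apply/orbitc_Acls_atP; exists k.
by apply/orbitc_Acls_atP; exists l.
Qed.

Lemma compound_dataE n d a b : compound_data n d a b <->
  [/\ (2 <= n)%N, (1 <= d)%N & a != b] /\
  [/\ (d ^ 2 + 1 = a ^ 2 + n.-1 * b ^ 2)%N, (3 * d = a + n.-1 * b + 1)%N &
      (d ^ 2 = 2 * a * b + n.-2 * b ^ 2)%N].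
Proof.
case: n => [|n]; first by split=> [[] | [[]]].
rewrite /compound_data Acls_at0 /minus1_class dotc_Acls_at dotc_Acls_at_Kc.
split=> [[n_ge2 d_ge1 ab [E1 E2]] | [[n_ge2 d_ge1 ab] [E1 E2 E3]]].
  move=> /(orthogonal_orbitc_Acls_at _ _ ab) orth.
  have ord0_max : (ord0 : 'I_n.+1) != ord_max by rewrite -val_eqE /=; lia.
  have := orth _ _ ord0_max; rewrite dotc_Acls_at_neq // => E3.
  by split; split=> //; lia.
split=> //; first by split; lia.
apply/(orthogonal_orbitc_Acls_at _ _ ab) => k l kl.
by rewrite dotc_Acls_at_neq //; lia.
Qed.

Lemma compound_data_classification n d a b : compound_data n d a b <->
  ((d, n, a, b) = (1, 3, 0, 1) \/ (d, n, a, b) = (2, 6, 0, 1) \/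
   (d, n, a, b) = (3, 7, 2, 1) \/ (d, n, a, b) = (6, 8, 3, 2))%N.
Proof.
rewrite compound_dataE; split; last first.
  by case=> [[-> -> -> ->]|[[-> -> -> ->]|[[-> -> -> ->]|[-> -> -> ->]]]].
case=> -[n_ge2 d_ge1 _] [E1 E2 E3].
have [a_eq | b_eq] := compound_gap n_ge2 E1 E3; subst.
  by case: (compound_solutions_succ n_ge2 d_ge1 E2 E3) => -[-> -> ->]; auto.
by case: (compound_solutions_pred n_ge2 E2 E3) => -[-> -> ->]; auto.
Qed.

Lemma sumc_orbitc_Acls n d a b : a != b ->
  sumc (orbitc (Acls n.+1 d a b)) = Lcls n.+1 (n.+1 * d) (a + n * b).
Proof.
move=> ab; rewrite Acls_at0 sumc_orbitc_Acls_at //.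
by congr pair; [lia | apply/ffunP => i; rewrite !ffunE; lia].
Qed.

Lemma compound_confE n d m : compound_conf n d m <->
  exists delta mu1 mu2, compound_data n delta mu1 mu2 /\
    d = (n * delta)%N /\ m = (mu1 + n.-1 * mu2)%N.
Proof.
split=> -[de [a [b [CD HL]]]]; exists de, a, b; split=> //.
  case: n CD HL => [|n] CD; first by case: CD.
  have [[_ _ ab] _] := iffLR (compound_dataE _ _ _ _) CD.
  by rewrite sumc_orbitc_Acls // => /Lcls_inj[] // -> ->.
case: HL => -> ->; case: n CD => [|n] CD; first by case: CD.
have [[_ _ ab] _] := iffLR (compound_dataE _ _ _ _) CD.
exact: sumc_orbitc_Acls.
Qed.

Lemma compound_conf_classification n d m : compound_conf n d m <->
  ((d, n, m) = (3, 3, 2) \/ (d, n, m) = (12, 6, 5) \/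
   (d, n, m) = (21, 7, 8) \/ (d, n, m) = (48, 8, 17))%N.
Proof.
rewrite compound_confE; split.
  move=> [de [a [b [/compound_data_classification + [-> ->]]]]].
  by case=> [[-> -> -> ->]|[[-> -> -> ->]|[[-> -> -> ->]|[-> -> -> ->]]]]; auto.
case=> [[-> -> ->]|[[-> -> ->]|[[-> -> ->]|[-> -> ->]]]];
  [exists 1%N, 0%N, 1%N | exists 2%N, 0%N, 1%N | exists 3%N, 2%N, 1%N
  | exists 6%N, 3%N, 2%N]; by split=> //; apply/compound_data_classification; auto.
Qed.

Theorem proposition5p4 :
  (forall n d m : nat,
     homog_conf n d m <->
     ((d, n, m) = (1, 2, 1) \/ (d, n, m) = (2, 5, 1) \/ (d, n, m) = (3, 3, 2) \/
      (d, n, m) = (12, 6, 5) \/ (d, n, m) = (21, 7, 8) \/ (d, n, m) = (48, 8, 17))%N)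
  /\ (forall n d m : nat,
       noncompound_conf n d m <-> ((d, n, m) = (1, 2, 1) \/ (d, n, m) = (2, 5, 1))%N)
  /\ (forall n delta mu1 mu2 : nat,
       compound_data n delta mu1 mu2 <->
       ((delta, n, mu1, mu2) = (1, 3, 0, 1) \/ (delta, n, mu1, mu2) = (2, 6, 0, 1) \/
        (delta, n, mu1, mu2) = (3, 7, 2, 1) \/ (delta, n, mu1, mu2) = (6, 8, 3, 2))%N).
Proof.
split; last by split; [exact: noncompound_conf_classification
                      | exact: compound_data_classification].
move=> n d m; have := noncompound_conf_classification n d m.
have := compound_conf_classification n d m; rewrite /homog_conf; tauto.
Qed.
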